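(* Let $k$ be an infinite field, $D$ a division algebra with $k$ contained in its centre, $n\ge 1$, $A=M_n(D)$, and let $B\subseteq A$ be a dense subalgebra containing $k$. Let $m\ge 1$, let $W=M_{n\times m}(D)$, regarded as a left $A$-module via matrix multiplication, and let $V\subseteq W$ be a $B$-submodule with $AV=W$. Write $m=nq+r$ with $0\le r<n$. Then there is an $A$-module automorphism $\sigma$ of $W$ such that $\sigma(V)$ contains the $q$ matrices $$E_1=(I\;0\;\cdots\;0\;0'),\quad E_2=(0\;I\;\cdots\;0\;0'),\ \dots,\ E_q=(0\;0\;\cdots\;I\;0')$$ and a matrix of the form $(Y_1\;Y_2\;\cdots\;Y_q\;Y')$, where $I$ is the $n\times n$ identity matrix, $0$ the $n\times n$ zero matrix, $0'$ the $n\times r$ zero matrix, $Y_1,\dots,Y_q$ are $n\times n$ matrices over $D$, and $Y'$ is an $n\times r$ matrix over $D$ of rank $r$. (If $r=0$ the blocks $0'$, $Y'$ are empty, and then $\sigma(V)$ contains an $A$-basis of $W\cong A^q$.)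
   Context: A subring $B$ of a ring $A$ is called dense in $A$ if every simple left $A$-module $U$ is also simple as a $B$-$\mathrm{End}_A(U)$-bimodule. The $A$-module automorphisms of $W=M_{n\times m}(D)$ are the maps $X\mapsto XT$ with $T\in GL_m(D)$. *)

From HB Require Import structures.
From mathcomp Require Import all_boot all_order all_algebra.
Set Implicit Arguments. Unset Strict Implicit. Unset Printing Implicit Defensive.
Import Order.TTheory GRing.Theory.
Local Open Scope ring_scope.

Definition infinite_field (F : fieldType) : Prop :=
  forall s : seq F, exists x : F, x \notin s.

Definition division_ring (D : unitRingType) : Prop :=
  forall x : D, x != 0 -> x \is a GRing.unit.

Definition is_submod (R : pzRingType) (U : lmodType R) (S : U -> Prop) : Prop :=
  S 0 /\ (forall x y, S x -> S y -> S (x + y)) /\ (forall (a : R) x, S x -> S (a *: x)).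

Definition simple_module (R : pzRingType) (U : lmodType R) : Prop :=
  (exists x : U, x != 0) /\
  forall S : U -> Prop, is_submod S -> (forall x, S x -> x = 0) \/ (forall x, S x).

Definition is_endo (R : pzRingType) (U : lmodType R) (f : U -> U) : Prop :=
  (forall x y, f (x + y) = f x + f y) /\ (forall (a : R) x, f (a *: x) = a *: f x).

(* U is simple as a B-End_R(U)-bimodule *)
Definition simple_bimodule (R : pzRingType) (B : R -> Prop) (U : lmodType R) : Prop :=
  (exists x : U, x != 0) /\
  forall S : U -> Prop,
    S 0 -> (forall x y, S x -> S y -> S (x + y)) ->
    (forall b x, B b -> S x -> S (b *: x)) ->
    (forall f, is_endo f -> forall x, S x -> S (f x)) ->
    (forall x, S x -> x = 0) \/ (forall x, S x).

Definition dense (R : pzRingType) (B : R -> Prop) : Prop :=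
  forall U : lmodType R, simple_module U -> simple_bimodule B U.

Definition subalg_containing_k (F : fieldType) (D : unitAlgType F) (N : nat)
  (B : 'M[D]_N.+1 -> Prop) : Prop :=
  (forall c : F, B ((c%:A : D)%:M)) /\
  (forall x y, B x -> B y -> B (x + y)) /\
  (forall x y, B x -> B y -> B (x * y)).

Definition B_submodule (D : nzRingType) (N m : nat) (B : 'M[D]_N.+1 -> Prop)
  (V : 'M[D]_(N.+1, m) -> Prop) : Prop :=
  V 0 /\ (forall x y, V x -> V y -> V (x + y)) /\
  (forall b x, B b -> V x -> V (b *m x)).

Definition A_generates (D : nzRingType) (N m : nat) (V : 'M[D]_(N.+1, m) -> Prop) : Prop :=
  forall w : 'M[D]_(N.+1, m), exists s : seq ('M[D]_N.+1 * 'M[D]_(N.+1, m)),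
    (forall p, p \in s -> V p.2) /\ w = \sum_(p <- s) p.1 *m p.2.

Definition A_automorphism (D : nzRingType) (N m : nat)
  (sigma : 'M[D]_(N.+1, m) -> 'M[D]_(N.+1, m)) : Prop :=
  (forall x y, sigma (x + y) = sigma x + sigma y) /\
  (forall (a : 'M[D]_N.+1) x, sigma (a *m x) = a *m sigma x) /\
  bijective sigma.

(* E_j = (0 ... I ... 0 0') with I in the j-th n x n block (j < q = m %/ N) *)
Definition Eblk (D : nzRingType) (N m : nat) (j : 'I_(m %/ N.+1)) : 'M[D]_(N.+1, m) :=
  \matrix_(i < N.+1, c < m) (if (c : nat) == (j * N.+1 + i)%N then 1 else 0).

Lemma last_col_lt (N m : nat) (c : 'I_(m %% N.+1)) : (m %/ N.+1 * N.+1 + c < m)%N.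
Proof. have h := ltn_ord c; rewrite [X in (_ < X)%N](divn_eq m N.+1) ltn_add2l; exact h. Qed.

Definition last_cols (D : nzRingType) (N m : nat) (Y : 'M[D]_(N.+1, m))
  : 'M[D]_(N.+1, m %% N.+1) :=
  \matrix_(i < N.+1, c < m %% N.+1) Y i (Ordinal (last_col_lt c)).

(* rank of an N x r matrix over a division ring equals r, i.e. its columns are
   (right) linearly independent over D *)
Definition full_col_rank (D : nzRingType) (N r : nat) (Y : 'M[D]_(N, r)) : Prop :=
  forall x : 'cV[D]_r, Y *m x = 0 -> x = 0.

(* It suffices to find [v_0, ..., v_q] in [V] such that the rows of
   [v_0, ..., v_(q-1)] followed by the first [r] rows of [v_q] form [m] left
   linearly independent vectors of [D^m]: the matrix [S] of these rows is then
   invertible, and [sigma X = X S^-1] maps [v_j] to [E_j] and the first [r] rows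
   of [v_q] to unit rows, so the last [r] columns of [sigma v_q] have rank [r].
   The rows are obtained one at a time.  When the next row of the current [v]
   depends on the rows already chosen, a nonzero column [z] killed by them gives
   [w] in [V] with [w z <> 0], density gives [b] in [B] with a suitable row of
   [b w] nonzero against [z], and [v + s b w] works for all but finitely many
   scalars [s], of which the infinite field [k] has enough. *)

From HB Require Import structures.
From mathcomp Require Import all_boot all_order all_algebra.
From Stdlib Require Import Classical.
Set Implicit Arguments. Unset Strict Implicit. Unset Printing Implicit Defensive.
Import GRing.Theory.
Local Open Scope ring_scope.

(* Left linear independence of the first [P] members of a family of rows; the
   families are indexed by [nat] so that they can be extended one row at a time. *)
Definition lin_indep (R : nzRingType) m P (G : nat -> 'rV[R]_m) :=
  forall a : nat -> R, \sum_(i < P) a i *: G i = 0 -> forall i, (i < P)%N -> a i = 0.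

Section LinIndep.
Variable R : nzRingType.

Lemma eq_lin_indep m P (G H : nat -> 'rV[R]_m) :
  (forall i, (i < P)%N -> G i = H i) -> lin_indep P G -> lin_indep P H.
Proof.
move=> eGH hG a ha; apply: hG; apply: etrans ha.
by apply: eq_bigr => i _; rewrite eGH.
Qed.

Lemma lin_indepPn m P (G : nat -> 'rV[R]_m) : ~ lin_indep P G ->
  exists a : nat -> R, \sum_(i < P) a i *: G i = 0 /\ exists2 i, (i < P)%N & a i != 0.
Proof.
move=> hG; apply: NNPP => hn; apply: hG => a ha i hi; apply/eqP/negPn/negP => hai.
by apply: hn; exists a; split => //; exists i.
Qed.

Lemma lin_indep_mulmx_eq0 m P (G : nat -> 'rV[R]_m) : lin_indep P G ->
  forall x : 'rV_P, x *m (\matrix_(i < P) G i) = 0 -> x = 0.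
Proof.
move=> hG x hx; apply/rowP => i; rewrite mxE.
have := hG (fun k => x 0 (insubd i k)) _ i (ltn_ord i); rewrite valKd; apply.
by apply: etrans hx; rewrite mulmx_sum_row; apply: eq_bigr => k _; rewrite rowK valKd.
Qed.

Lemma row_nz_entry m (v : 'rV[R]_m) : v != 0 -> exists k, v 0 k != 0.
Proof.
move=> v_neq0; apply/existsP; apply: contraR v_neq0; rewrite negb_exists => /forallP v0.
by apply/eqP/rowP => k; rewrite [RHS]mxE; apply/eqP/negPn.
Qed.

Lemma row_col'0_eq0 b (v : 'rV[R]_b.+1) : v 0 0 = 0 -> col' 0 v = 0 -> v = 0.
Proof.
move=> v00 v'0; apply/rowP => j; rewrite [RHS]mxE.
case: (unliftP 0 j) => [j'|] ->; last by rewrite v00.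
by have := congr1 (fun M : 'rV_b => M 0 j') v'0; rewrite !mxE.
Qed.

Lemma big_ord_bump (V : zmodType) P i0 (H : nat -> V) : (i0 < P.+1)%N ->
  \sum_(i < P.+1) H i = H i0 + \sum_(i < P) H (bump i0 i).
Proof. by move=> hi; rewrite (bigD1_ord (Ordinal hi)). Qed.

(* Gaussian elimination on the first coordinate. *)
Lemma lin_dep_of_lt (left_inv : forall x : R, x != 0 -> exists y, y * x = 1) b P
    (G : nat -> 'rV[R]_b) : (b < P)%N ->
  exists a : nat -> R, \sum_(i < P) a i *: G i = 0 /\ exists2 i, (i < P)%N & a i != 0.
Proof.
elim: b P G => [|b IH] P G hP.
  exists (fun _ => 1); split; first by apply/rowP => [[]].
  by exists 0%N => //; rewrite oner_eq0.
have col'_sum (a : nat -> R) (H : nat -> 'rV[R]_b.+1) Q :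
    col' 0 (\sum_(i < Q) a i *: H i) = \sum_(i < Q) a i *: col' 0 (H i).
  by apply/rowP => j; rewrite !mxE !summxE; apply: eq_bigr => k _; rewrite !mxE.
have [/forallP G0 | /forallPn [i0 Gi0]] := boolP [forall i : 'I_P, G i 0 0 == 0].
  have [a [ha [i hi ai]]] := IH P (fun i => col' 0 (G i)) (ltnW hP).
  exists a; split; last by exists i.
  apply: row_col'0_eq0; last by rewrite col'_sum.
  by rewrite summxE big1 // => k _; rewrite mxE (eqP (G0 k)) mulr0.
move: i0 Gi0; case: P G hP => [//|P] G hP i0 Gi0.
have [pv pvK] := left_inv _ Gi0.
pose c i := G (bump i0 i) 0 0 * pv.
have [a [ha [i1 hi1 ai1]]] :=
  IH P (fun i => col' 0 (G (bump i0 i) - c i *: G i0)) hP.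
pose a' k := if k == i0 :> nat then - \sum_(i < P) a i * c i else a (unbump i0 k).
have a'_bump i : a' (bump i0 i) = a i.
  by rewrite /a' eq_sym (negPf (neq_bump _ _)) bumpK.
exists a'; split; last first.
  exists (bump i0 i1); last by rewrite a'_bump.
  by rewrite /bump; case: (i0 <= i1)%N; rewrite ?add1n ?add0n ltnS // ltnW.
rewrite (big_ord_bump (fun k => a' k *: G k) (ltn_ord i0)) /= {1}/a' eqxx.
under eq_bigr do rewrite a'_bump.
have -> : (- \sum_(i < P) a i * c i) *: G i0 + \sum_(i < P) a i *: G (bump i0 i)
    = \sum_(i < P) a i *: (G (bump i0 i) - c i *: G i0).
  rewrite scaleNr scaler_suml addrC -sumrB.
  by apply: eq_bigr => i _; rewrite scalerBr scalerA.
apply: row_col'0_eq0; last by rewrite (col'_sum a (fun i => G (bump i0 i) - c i *: G i0)).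
rewrite summxE big1 // => i _; rewrite !mxE.
by rewrite /c -mulrA pvK mulr1 subrr mulr0.
Qed.

End LinIndep.

Section DivisionRing.
Variable D : unitRingType.
Hypothesis divD : division_ring D.

Lemma div_mulIr_eq0 (x y : D) : x * y = 0 -> y != 0 -> x = 0.
Proof. by move=> xy0 /divD yU; rewrite -(mulrK yU x) xy0 mul0r. Qed.

Lemma scaler_row_eq0 m (c : D) (v : 'rV[D]_m) : c *: v = 0 -> v != 0 -> c = 0.
Proof.
move=> cv0 /row_nz_entry [k vk]; apply: div_mulIr_eq0 vk.
by have := congr1 (fun M : 'rV[D]_m => M 0 k) cv0; rewrite !mxE.
Qed.

Lemma lin_indep_leq b P (G : nat -> 'rV[D]_b) : lin_indep P G -> (P <= b)%N.
Proof.
move=> hG; rewrite leqNgt; apply/negP => bP.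
have left_inv (x : D) : x != 0 -> exists y, y * x = 1.
  by move=> /divD xU; exists x^-1; rewrite mulVr.
have [a [ha [i hi ai]]] := lin_dep_of_lt left_inv G bP.
by move: ai; rewrite (hG a ha i hi) eqxx.
Qed.

(* The right kernel is a left kernel over the opposite ring [D^c]. *)
Lemma right_kernel_nz m P (G : nat -> 'rV[D]_m) : (P < m)%N ->
  exists2 z : 'cV[D]_m, z != 0 & forall i, (i < P)%N -> G i *m z = 0.
Proof.
case: m G => // m G hP.
pose Gc (j : nat) : 'rV[D^c]_P := \row_(i < P) (G i 0 (inord j) : D^c).
have left_inv (x : D^c) : x != 0 -> exists y : D^c, y * x = 1.
  by move=> /divD xU; exists (x : D)^-1; apply: (@mulrV D).
have [a [ha [j hj aj]]] := lin_dep_of_lt left_inv Gc hP.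
exists (\col_(j < m.+1) (a j : D)).
  apply/negP => /eqP/matrixP /(_ (inord j) 0); rewrite !mxE inordK //.
  by move/eqP; rewrite (negPf aj).
move=> i hi; apply/rowP => k; rewrite ord1 !mxE.
have := congr1 (fun M : 'rV[D^c]_P => M 0 (Ordinal hi)) ha.
rewrite !mxE summxE /= => h; apply: etrans h.
by apply: eq_bigr => l _; rewrite !mxE inord_val.
Qed.

Lemma lin_indep_extend_span m P (G : nat -> 'rV[D]_m) : lin_indep P G ->
  ~ (exists a : nat -> D, G P = \sum_(i < P) a i *: G i) -> lin_indep P.+1 G.
Proof.
move=> hG hspan a; rewrite big_ord_recr /= => ha.
have aP0 : a P = 0.
  apply/eqP/negPn/negP => /divD aPU; apply: hspan.
  exists (fun i => - ((a P)^-1 * a i)).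
  have -> : G P = (a P)^-1 *: (a P *: G P) by rewrite scalerA mulVr // scale1r.
  rewrite -(addr0_eq ha) scalerN scaler_sumr -sumrN.
  by apply: eq_bigr => i _; rewrite scalerA scaleNr.
move: ha; rewrite aP0 scale0r addr0 => ha i; rewrite ltnS leq_eqVlt.
by case/orP => [/eqP -> // | hi]; apply: hG ha i hi.
Qed.

Lemma lin_indep_extend_kernel m P (G : nat -> 'rV[D]_m) (z : 'cV_m) :
  lin_indep P G -> (forall i, (i < P)%N -> G i *m z = 0) -> G P *m z != 0 ->
  lin_indep P.+1 G.
Proof.
move=> hG Gz GPz a; rewrite big_ord_recr /= => ha.
have aP0 : a P = 0.
  apply: scaler_row_eq0 GPz; move: (congr1 (mulmx^~ z) ha).
  rewrite mul0mx mulmxDl mulmx_suml big1 ?add0r ?scalemxAl //.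
  by move=> i _; rewrite -scalemxAl Gz // scaler0.
move: ha; rewrite aP0 scale0r addr0 => ha i; rewrite ltnS leq_eqVlt.
by case/orP => [/eqP -> // | hi]; apply: hG ha i hi.
Qed.

Lemma lin_indep_triangular m P (G H : nat -> 'rV[D]_m) (e : D) (kappa : nat -> D) :
  lin_indep P.+1 G -> (forall i, (i < P)%N -> H i = G i) -> e != 0 ->
  H P = e *: G P + \sum_(i < P) kappa i *: H i -> lin_indep P.+1 H.
Proof.
move=> hG HG e_neq0 HP a; rewrite big_ord_recr /= HP => ha.
pose b i := if (i < P)%N then a i + a P * kappa i else a P * e.
have hb : \sum_(i < P.+1) b i *: G i = 0.
  rewrite big_ord_recr /= {2}/b ltnn; apply: etrans ha.
  rewrite scalerDr scalerA scaler_sumr [RHS]addrCA addrC.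
  congr (_ + _); rewrite -big_split; apply: eq_bigr => i _ /=.
  by rewrite /b ltn_ord HG // scalerA -scalerDl.
have aP0 : a P = 0.
  by apply: div_mulIr_eq0 e_neq0; have := hG b hb P (ltnSn _); rewrite /b ltnn.
move=> i; rewrite ltnS leq_eqVlt => /orP [/eqP -> // | hi].
by have := hG b hb i (ltnW hi); rewrite /b hi aP0 mul0r addr0.
Qed.

(* [y j] is an eigenvector of the pencil [(M0, M1)] for the central eigenvalue
   [t j]; as for a single matrix, distinct eigenvalues force independence. *)
Lemma pencil_eigen_lin_indep Q m (M0 M1 : 'M[D]_(Q, m)) (t : nat -> D)
    (y : nat -> 'rV[D]_Q) L :
  (forall x : 'rV_Q, x *m M0 = 0 -> x = 0) ->
  (forall j x, t j * x = x * t j) ->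
  (forall j j', (j < L)%N -> (j' < L)%N -> j != j' -> t j - t j' != 0) ->
  (forall j, (j < L)%N -> t j *: (y j *m M0) + y j *m M1 = 0) ->
  (forall j, (j < L)%N -> y j != 0) -> lin_indep L y.
Proof.
move=> M0_inj t_central; elim: L => [|L IH] t_inj y_eig y_neq0 a ha //.
have E0 : \sum_(j < L.+1) a j *: (y j *m M0) = 0.
  have := congr1 (mulmx^~ M0) ha; rewrite mul0mx mulmx_suml => ha0.
  by apply: etrans ha0; apply: eq_bigr => j _; rewrite scalemxAl.
have E1 : \sum_(j < L.+1) (a j * t j) *: (y j *m M0) = 0.
  have := congr1 (mulmx^~ M1) ha; rewrite mul0mx mulmx_suml => ha1.
  apply/eqP; rewrite -oppr_eq0 -sumrN; apply/eqP; apply: etrans ha1.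
  apply: eq_bigr => j _; rewrite -scalerA -scalerN -scalemxAl; congr (_ *: _).
  by apply/eqP; rewrite eqr_oppLR -addr_eq0 y_eig.
have E2 : \sum_(j < L) (a j * (t L - t j)) *: y j = 0.
  suff : \sum_(j < L.+1) (a j * (t L - t j)) *: y j = 0.
    by rewrite big_ord_recr /= subrr mulr0 scale0r addr0.
  apply: M0_inj; rewrite mulmx_suml.
  have -> : \sum_(j < L.+1) ((a j * (t L - t j)) *: y j) *m M0 =
      t L *: \sum_(j < L.+1) a j *: (y j *m M0) - \sum_(j < L.+1) (a j * t j) *: (y j *m M0).
    rewrite scaler_sumr -sumrB; apply: eq_bigr => j _.
    by rewrite -scalemxAl mulrBr scalerBl scalerA t_central.
  by rewrite E0 E1 scaler0 subrr.
have a_lt j : (j < L)%N -> a j = 0.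
  move=> hj; apply: (div_mulIr_eq0 (y := t L - t j)); last first.
    by apply: t_inj => //; [exact: ltnW | rewrite neq_ltn hj orbT].
  have IH' := IH (fun k k' hk hk' => t_inj k k' (ltnW hk) (ltnW hk'))
    (fun k hk => y_eig k (ltnW hk)) (fun k hk => y_neq0 k (ltnW hk)).
  exact: (IH' (fun k => a k * (t L - t k)) E2 j hj).
move=> j; rewrite ltnS leq_eqVlt => /orP [/eqP -> | hj]; last exact: a_lt.
move: ha; rewrite big_ord_recr /= big1 ?add0r => [/scaler_row_eq0 -> //|i _].
  exact: y_neq0.
by rewrite a_lt // scale0r.
Qed.

Lemma lin_indep_span m (G : nat -> 'rV[D]_m) (v : 'rV[D]_m) : lin_indep m G ->
  exists a : nat -> D, v = \sum_(i < m) a i *: G i.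
Proof.
move=> hG; apply: NNPP => hspan.
pose G' i := if i == m then v else G i.
have hG' : lin_indep m G' by apply: eq_lin_indep hG => i hi; rewrite /G' (ltn_eqF hi).
suff /(lin_indep_extend_span hG')/lin_indep_leq :
    ~ (exists a : nat -> D, G' m = \sum_(i < m) a i *: G' i) by rewrite ltnn.
move=> [a ha]; apply: hspan; exists a; rewrite /G' eqxx in ha; rewrite ha.
by apply: eq_bigr => i _; rewrite (ltn_eqF (ltn_ord i)).
Qed.

End DivisionRing.

Lemma fin_choice (T : Type) (t0 : T) L (P : nat -> T -> Prop) :
  (forall j, (j < L)%N -> exists y, P j y) ->
  exists f : nat -> T, forall j, (j < L)%N -> P j (f j).
Proof.
elim: L => [|L IH] hP; first by exists (fun _ => t0).
have [f hf] := IH (fun j hj => hP j (ltnW hj)).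
have [y hy] := hP L (ltnSn _).
exists (fun j => if j == L then y else f j) => j.
rewrite ltnS leq_eqVlt => /orP [/eqP -> | hj]; first by rewrite eqxx.
by rewrite (ltn_eqF hj); apply: hf.
Qed.

Lemma lin_indep_invertible (D : unitRingType) m (G : nat -> 'rV[D]_m) :
  division_ring D -> lin_indep m G ->
  exists T : 'M[D]_m, T *m \matrix_(i < m) G i = 1%:M /\ \matrix_(i < m) G i *m T = 1%:M.
Proof.
case: m G => [|m] G divD hG; first by exists 0; split; apply/matrixP => [[]].
set S := \matrix_(i < m.+1) G i.
have [f hf] : exists f : nat -> 'rV[D]_m.+1,
    forall j, (j < m.+1)%N -> f j *m S = row (inord j) 1%:M.
  apply: (fin_choice 0 (P := fun j t => t *m S = row (inord j) 1%:M)) => j _.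
  have [a ->] := lin_indep_span divD (row (inord j) 1%:M) hG.
  exists (\row_(i < m.+1) a i); rewrite mulmx_sum_row.
  by apply: eq_bigr => i _; rewrite rowK mxE.
have TS1 : \matrix_(i < m.+1) f i *m S = 1%:M.
  by apply/row_matrixP => l; rewrite row_mul rowK hf // inord_val.
exists (\matrix_(i < m.+1) f i); split => //.
apply/eqP; rewrite -subr_eq0; apply/eqP/row_matrixP => l; rewrite row0.
apply: lin_indep_mulmx_eq0 hG _ _.
by rewrite -row_mul mulmxBl -mulmxA TS1 mulmx1 mul1mx subrr row0.
Qed.

Lemma infinite_uniq_seq (F : fieldType) L : infinite_field F ->
  exists ts : seq F, [/\ uniq ts, size ts = L & 0 \notin ts].
Proof.
move=> infF; elim: L => [|L [ts [ts_uniq ts_size ts0]]]; first by exists [::].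
have [x] := infF (0 :: ts); rewrite in_cons negb_or => /andP [x_neq0 x_ts].
by exists (x :: ts); rewrite /= x_ts ts_uniq ts_size in_cons negb_or eq_sym x_neq0 ts0.
Qed.

Section Perturbation.
Variables (F : fieldType) (D : unitAlgType F).
Hypotheses (infF : infinite_field F) (divD : division_ring D).

Lemma alg_eq0 (c : F) : ((c%:A : D) == 0) = (c == 0).
Proof. by rewrite scaler_eq0 oner_eq0 orbF. Qed.

(* If [M0 + s M1] were dependent for [Q + 1] distinct nonzero [s], the
   dependence vectors would be [Q + 1] independent eigenvectors in [D^Q]. *)
Lemma lin_indep_perturb Q m (M0 M1 : nat -> 'rV[D]_m) : lin_indep Q M0 ->
  exists2 s : F, s != 0 & lin_indep Q (fun i => M0 i + s%:A *: M1 i).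
Proof.
move=> hM0; have [ts [ts_uniq ts_size ts0]] := infinite_uniq_seq Q.+1 infF.
have ts_neq0 j : (j < Q.+1)%N -> nth 0 ts j != 0.
  by move=> hj; apply: contraNneq ts0 => <-; rewrite mem_nth ?ts_size.
pose M0m := \matrix_(i < Q) M0 i; pose M1m := \matrix_(i < Q) M1 i.
apply: NNPP => bad.
have [y hy] : exists y : nat -> 'rV[D]_Q, forall j, (j < Q.+1)%N ->
    y j != 0 /\ y j *m M0m + (nth 0 ts j)%:A *: (y j *m M1m) = 0.
  apply: (fin_choice 0 (P := fun j y =>
    y != 0 /\ y *m M0m + (nth 0 ts j)%:A *: (y *m M1m) = 0)) => j hj.
  have [a [ha [i hi ai]]] :
      exists a : nat -> D, \sum_(i < Q) a i *: (M0 i + (nth 0 ts j)%:A *: M1 i) = 0 /\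
        exists2 i, (i < Q)%N & a i != 0.
    apply: (@lin_indepPn _ m Q (fun i => M0 i + (nth 0 ts j)%:A *: M1 i)) => hind.
    by apply: bad; exists (nth 0 ts j); rewrite ?ts_neq0.
  exists (\row_(k < Q) a k); split.
    by apply/negP => /eqP/rowP /(_ (Ordinal hi)); rewrite !mxE; apply/eqP.
  apply: etrans ha; rewrite !mulmx_sum_row scaler_sumr -big_split /=.
  by apply: eq_bigr => k _; rewrite !rowK !mxE scalerDr !scalerA mulr_algl mulr_algr.
pose t j := ((nth 0 ts j)^-1)%:A : D.
have : lin_indep Q.+1 y.
  apply: (pencil_eigen_lin_indep divD (M0 := M0m) (M1 := M1m) (t := t)).
  - exact: lin_indep_mulmx_eq0.
  - by move=> j x; rewrite /t mulr_algl mulr_algr.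
  - move=> j j' hj hj' jj'; rewrite /t -scalerBl alg_eq0 subr_eq0.
    by apply: contra jj' => /eqP/invr_inj/eqP; rewrite nth_uniq ?ts_size.
  - move=> j hj; have [_ /(congr1 (fun M => t j *: M))] := hy j hj.
    by rewrite scaler0 scalerDr scalerA /t mulr_algl scalerA mulVf ?ts_neq0 // !scale1r.
  - by move=> j hj; have [] := hy j hj.
by move/(lin_indep_leq divD); rewrite ltnn.
Qed.

End Perturbation.

(* The simple [M_N(D)]-module [D^N], to which density is applied. *)
Definition colmod (D : nzRingType) N := 'cV[D]_N.
HB.instance Definition _ (D : nzRingType) N := GRing.Zmodule.on (colmod D N).

Section ColumnModule.
Variables (D : nzRingType) (N : nat).

Definition colmod_scale (a : 'M[D]_N) (x : colmod D N) : colmod D N := a *m x.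

Lemma colmod_scaleA a b x : colmod_scale a (colmod_scale b x) = colmod_scale (a * b) x.
Proof. exact: mulmxA. Qed.

Lemma colmod_scale1 x : colmod_scale 1 x = x.
Proof. exact: mul1mx. Qed.

Lemma colmod_scaleDr a x y : colmod_scale a (x + y) = colmod_scale a x + colmod_scale a y.
Proof. exact: mulmxDr. Qed.

Lemma colmod_scaleDl x : {morph colmod_scale^~ x : a b / a + b}.
Proof. by move=> a b; apply: mulmxDl. Qed.

HB.instance Definition _ := GRing.Zmodule_isLmodule.Build 'M[D]_N (colmod D N)
  colmod_scaleA colmod_scale1 colmod_scaleDr colmod_scaleDl.

Lemma colmod_scaleE a (x : colmod D N) : a *: x = a *m x.
Proof. by []. Qed.

End ColumnModule.

Section Density.
Variables (D : unitRingType) (n : nat).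
Hypothesis divD : division_ring D.

Lemma colmod_simple : simple_module (colmod D n.+1).
Proof.
split.
  exists (delta_mx 0 0); apply/negP => /eqP /matrixP /(_ 0 0).
  by rewrite !mxE eqxx /= => /eqP; rewrite oner_eq0.
move=> S [S0 [SD SZ]].
have [S_0 | S_nz] := classic (forall x, S x -> x = 0); first by left.
have [u [Su u_neq0]] : exists u, S u /\ u != 0.
  apply: NNPP => hn; apply: S_nz => x Sx; apply/eqP/negPn/negP => x_neq0.
  by apply: hn; exists x.
right => y.
have /row_nz_entry [i] : u^T != 0 by rewrite trmx_eq0.
rewrite mxE => ui.
pose g : 'rV[D]_n.+1 := (u i 0)^-1 *: delta_mx 0 i.
have gu : g *m u = 1%:M.
  apply/matrixP => a b; rewrite !ord1 !mxE (bigD1 i) //= big1 ?addr0.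
    by rewrite !mxE !eqxx mulr1 mulVr //; apply: divD.
  by move=> k ki; rewrite !mxE (negPf ki) mulr0 mul0r.
have -> : y = (y *m g : 'M_n.+1) *: u by rewrite colmod_scaleE -mulmxA gu mulmx1.
exact: SZ.
Qed.

Lemma colmod_endo_mulmx (f : colmod D n.+1 -> colmod D n.+1) : is_endo f ->
  exists c : 'M[D]_1, forall x, f x = x *m c.
Proof.
move=> [_ fZ]; exists ((delta_mx 0 0)^T *m f (delta_mx 0 0)) => x.
have e00 : (delta_mx 0 0 : 'cV[D]_n.+1)^T *m delta_mx 0 0 = 1%:M.
  by rewrite trmx_delta mul_delta_mx; apply/matrixP => a b; rewrite !ord1 !mxE.
have x_e0 : x = (x *m (delta_mx 0 0)^T : 'M_n.+1) *: (delta_mx 0 0 : colmod D n.+1).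
  by rewrite colmod_scaleE -mulmxA e00 mulmx1.
by rewrite {1}x_e0 fZ colmod_scaleE mulmxA.
Qed.

Variable B : 'M[D]_n.+1 -> Prop.
Hypotheses (B1 : B 1) (BM : forall x y, B x -> B y -> B (x * y)) (denseB : dense B).

(* [B x End(D^N)] is a B-End-submodule containing [x], hence everything. *)
Lemma dense_span (x : 'cV[D]_n.+1) : x != 0 -> forall y : 'cV[D]_n.+1,
  exists s : seq ('M[D]_n.+1 * 'M[D]_1),
    (forall p, p \in s -> B p.1) /\ y = \sum_(p <- s) p.1 *m x *m p.2.
Proof.
move=> x_neq0; have [_ simpleB] := denseB colmod_simple.
pose S (y : colmod D n.+1) := exists s : seq ('M[D]_n.+1 * 'M[D]_1),
  (forall p, p \in s -> B p.1) /\ y = \sum_(p <- s) p.1 *m x *m p.2.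
case: (simpleB S) => //.
- by exists [::]; rewrite big_nil.
- move=> y1 y2 [s1 [Bs1 ->]] [s2 [Bs2 ->]]; exists (s1 ++ s2); rewrite big_cat.
  by split => // p; rewrite mem_cat => /orP [] ?; [apply: Bs1 | apply: Bs2].
- move=> b y Bb [s [Bs ->]]; exists [seq (b * p.1, p.2) | p <- s]; split.
    by move=> p /mapP [q qs ->]; apply: BM => //; apply: Bs.
  by rewrite colmod_scaleE big_map mulmx_sumr; apply: eq_bigr => p _; rewrite !mulmxA.
- move=> f /colmod_endo_mulmx [c fc] y [s [Bs ->]].
  exists [seq (p.1, p.2 *m c) | p <- s]; split.
    by move=> p /mapP [q qs ->] /=; apply: Bs.
  by rewrite fc big_map mulmx_suml; apply: eq_bigr => p _; rewrite !mulmxA.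
- move=> S0; case/negP: x_neq0; apply/eqP/S0.
  exists [:: (1, 1%:M)]; split; last by rewrite big_seq1 mul1mx mulmx1.
  by move=> p; rewrite inE => /eqP ->.
Qed.

Lemma dense_witness (beta : 'rV[D]_n.+1) (x : 'cV[D]_n.+1) :
  beta != 0 -> x != 0 -> exists2 b, B b & beta *m b *m x != 0.
Proof.
move=> /row_nz_entry [k betak] x_neq0; apply: NNPP => hn; case/negP: betak.
have -> : beta 0 k = (beta *m (delta_mx k 0 : 'cV_n.+1)) 0 0.
  rewrite mxE (bigD1 k) //= big1 ?addr0 => [|l lk].
    by rewrite mxE eqxx mulr1.
  by rewrite mxE (negPf lk) mulr0.
have [s [Bs ->]] := dense_span x_neq0 (delta_mx k 0).
rewrite mulmx_sumr big1_seq ?mxE // => p /andP [_ ps]; rewrite !mulmxA.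
apply/eqP/negPn/negP => nz; apply: hn; exists p.1; first exact: Bs.
by apply: contraNneq nz => ->; rewrite mul0mx.
Qed.

End Density.

Section Stacking.
Variables (D : nzRingType) (n m : nat).

Definition stack_rows p (Rf : nat -> 'rV[D]_m) (v : 'M[D]_(n.+1, m)) i : 'rV[D]_m :=
  if (i < p)%N then Rf i else row (inord (i - p)) v.

Definition block_rows (vs : nat -> 'M[D]_(n.+1, m)) i : 'rV[D]_m :=
  row (inord (i %% n.+1)%N) (vs (i %/ n.+1)%N).

Lemma stack_block_rows vs vs' j i : (forall k, k != j -> vs' k = vs k) ->
  (i < j * n.+1 + n.+1)%N ->
  stack_rows (j * n.+1) (block_rows vs) (vs' j) i = block_rows vs' i.
Proof.
move=> vs'E hi; rewrite /stack_rows /block_rows; case: ltnP => hij.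
  by rewrite vs'E // ltn_eqF // ltn_divLR.
have [k ek] : exists k, i = (j * n.+1 + k)%N by exists (i - j * n.+1)%N; rewrite subnKC.
move: hi; rewrite ek ltn_add2l => hk.
by rewrite addKn modnMDl modn_small // divnMDl // divn_small ?addn0.
Qed.

(* Times [v], this is row [t] of [v] minus the [v]-part of a dependence
   relation [a] of [stack_rows p Rf v] at index [p + t]. *)
Definition dep_row p t (a : nat -> D) : 'rV[D]_n.+1 :=
  delta_mx 0 (inord t) - \sum_(l < t) a (p + l)%N *: delta_mx 0 (inord l).

Lemma dep_row_neq0 p t a : (t < n.+1)%N -> dep_row p t a != 0.
Proof.
move=> lt_tn; have dep_t : dep_row p t a 0 (inord t) = 1.
  rewrite !mxE summxE big1 ?subr0 ?eqxx // => l _.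
  rewrite !mxE eqxx -val_eqE /= !inordK ?(gtn_eqF (ltn_ord l)) ?mulr0 //.
  exact: ltn_trans (ltn_ord l) lt_tn.
by apply/negP => /eqP/rowP/(_ (inord t)); rewrite dep_t mxE; apply/eqP/oner_neq0.
Qed.

Lemma stack_rows_shift p t (Rf : nat -> 'rV[D]_m) v g (a : nat -> D) c :
  (forall x, c * x = x * c) ->
  stack_rows p Rf v (p + t) = \sum_(i < p + t) a i *: stack_rows p Rf v i ->
  stack_rows p Rf (v + c *: g) (p + t) =
    c *: (dep_row p t a *m g) + \sum_(i < p + t) a i *: stack_rows p Rf (v + c *: g) i.
Proof.
move=> c_central vP.
have rows_u i : (p <= i)%N ->
    stack_rows p Rf (v + c *: g) i = stack_rows p Rf v i + c *: row (inord (i - p)) g.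
  by move=> hi; rewrite /stack_rows ltnNge hi /= linearD linearZ.
have low : \sum_(i < p) a i *: stack_rows p Rf (v + c *: g) i =
    \sum_(i < p) a i *: stack_rows p Rf v i.
  by apply: eq_bigr => i _; rewrite /stack_rows ltn_ord.
have high : \sum_(l < t) a (p + l)%N *: stack_rows p Rf (v + c *: g) (p + l) =
    \sum_(l < t) a (p + l)%N *: stack_rows p Rf v (p + l)
    + c *: \sum_(l < t) a (p + l)%N *: row (inord l) g.
  rewrite scaler_sumr -big_split; apply: eq_bigr => l _ /=.
  by rewrite rows_u ?leq_addr // addKn scalerDr !scalerA c_central.
rewrite rows_u ?leq_addr // vP addKn !big_split_ord /= low high.
rewrite mulmxBl mulmx_suml -rowE scalerBr.
under [X in _ - c *: X]eq_bigr do rewrite -scalemxAl -rowE.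
by rewrite -[LHS]addrA [RHS]addrCA; congr (_ + _); rewrite [RHS]addrCA subrK.
Qed.

Lemma row_block_mulmx vs (T : 'M[D]_m) j (i : 'I_n.+1) (k : 'I_m) :
  (forall k : 'I_m, block_rows vs k *m T = row k 1%:M) ->
  k = (j * n.+1 + i)%N :> nat -> row i (vs j *m T) = row k 1%:M.
Proof.
move=> hT ek; rewrite -hT /block_rows ek row_mul.
by rewrite modnMDl modn_small // divnMDl // divn_small ?addn0 // inord_val.
Qed.

Lemma block_rows_Eblk vs (T : 'M[D]_m) (j : 'I_(m %/ n.+1)) :
  (forall k : 'I_m, block_rows vs k *m T = row k 1%:M) -> vs j *m T = Eblk D j.
Proof.
move=> hT; apply/matrixP => i c.
have ltm : (j * n.+1 + i < m)%N.
  apply: leq_trans (leq_divM m n.+1); apply: leq_trans (leq_mul (ltn_ord j) (leqnn n.+1)).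
  by rewrite mulSnr ltn_add2l.
have := congr1 (fun M : 'rV_m => M 0 c) (row_block_mulmx (k := Ordinal ltm) hT erefl).
by rewrite /Eblk !mxE => ->; rewrite -val_eqE /= eq_sym; case: eqP.
Qed.

Lemma block_rows_full_col_rank vs (T : 'M[D]_m) :
  (forall k : 'I_m, block_rows vs k *m T = row k 1%:M) ->
  full_col_rank (last_cols (vs (m %/ n.+1)%N *m T)).
Proof.
move=> hT x; set Y := last_cols _ => Yx0; apply/matrixP => l z; rewrite ord1 mxE.
have lt_n : (l < n.+1)%N := leq_trans (ltn_ord l) (ltnW (ltn_pmod m (ltn0Sn n))).
have Yrow : row (inord l) Y = row l 1%:M.
  have ek : Ordinal (last_col_lt l) = (m %/ n.+1 * n.+1 + (inord l : 'I_n.+1))%N :> nat.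
    by rewrite /= inordK.
  apply/rowP => c; rewrite /Y !mxE.
  have := congr1 (fun M : 'rV_m => M 0 (Ordinal (last_col_lt c))) (row_block_mulmx hT ek).
  by rewrite !mxE => ->; rewrite -val_eqE /= eqn_add2l.
have : row (inord l) (Y *m x) = row l x by rewrite row_mul Yrow -row_mul mul1mx.
by rewrite Yx0 => /rowP/(_ 0); rewrite !mxE.
Qed.

End Stacking.

Arguments dep_row {D n} p t a.

Section Extension.
Variables (F : fieldType) (D : unitAlgType F) (n m : nat).
Variables (B : 'M[D]_n.+1 -> Prop) (V : 'M[D]_(n.+1, m) -> Prop).
Hypotheses (infF : infinite_field F) (divD : division_ring D)
  (subalgB : subalg_containing_k B) (denseB : dense B)
  (submodV : B_submodule B V) (genV : A_generates V).

Lemma B_scalar (c : F) : B ((c%:A : D)%:M).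
Proof. by case: subalgB. Qed.

Lemma B_mul x y : B x -> B y -> B (x * y).
Proof. by case: subalgB => _ [_]; apply. Qed.

Lemma B_1 : B 1.
Proof. by have := B_scalar 1; rewrite scale1r. Qed.

Lemma V_0 : V 0.
Proof. by case: submodV. Qed.

Lemma V_add x y : V x -> V y -> V (x + y).
Proof. by case: submodV => _ [+ _]; apply. Qed.

Lemma V_mul b x : B b -> V x -> V (b *m x).
Proof. by case: submodV => _ [_]; apply. Qed.

Lemma generator_nonvanishing (z : 'cV[D]_m) : z != 0 -> exists2 w, V w & w *m z != 0.
Proof.
move=> z_neq0; apply: NNPP => hn.
have Vz0 w : V w -> w *m z = 0.
  by move=> Vw; apply/eqP/negPn/negP => wz; apply: hn; exists w.
case/negP: z_neq0; apply/eqP/matrixP => l k; rewrite ord1 [RHS]mxE.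
pose W : 'M[D]_(n.+1, m) := \matrix_(i, c) (c == l)%:R.
have -> : z l 0 = (W *m z) 0 0.
  rewrite !mxE (bigD1 l) //= big1 ?addr0 => [|c cl]; rewrite !mxE ?eqxx ?mul1r //.
  by rewrite (negPf cl) mul0r.
have [s [Vs ->]] := genV W.
rewrite mulmx_suml big1_seq ?mxE // => p /andP [_ ps].
by rewrite -mulmxA Vz0 ?mulmx0 //; apply: Vs.
Qed.

(* If row [t] of [v] depends on the previous rows, pick [w] in [V] and, by
   density, [b] in [B] so that [dep_row p t a *m (b *m w)] escapes their span;
   then [u = v + s b w] works for a generic scalar [s]. *)
Lemma stack_rows_extend p t (Rf : nat -> 'rV[D]_m) v : V v ->
  lin_indep (p + t) (stack_rows p Rf v) -> (t < n.+1)%N -> (p + t < m)%N ->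
  exists2 u, V u & lin_indep (p + t).+1 (stack_rows p Rf u).
Proof.
move=> Vv hind lt_tn lt_Pm; set P := (p + t)%N in hind lt_Pm *.
set G := stack_rows p Rf v in hind *.
have [[a GP]|] := classic (exists a : nat -> D, G P = \sum_(i < P) a i *: G i); last first.
  by exists v => //; apply: lin_indep_extend_span.
have [z z_neq0 Gz] := right_kernel_nz divD G lt_Pm.
have [w Vw wz_neq0] := generator_nonvanishing z_neq0.
have [b Bb hb] :=
  dense_witness divD B_1 B_mul denseB (dep_row_neq0 p a lt_tn) wz_neq0.
pose g := b *m w.
pose M0 i := if (i < P)%N then G i else dep_row p t a *m g.
pose M1 i := if (p <= i < P)%N then row (inord (i - p)) g else 0.
have hM0 : lin_indep P.+1 M0.
  apply: (lin_indep_extend_kernel divD (z := z)); rewrite /M0 ?ltnn //.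
    by apply: eq_lin_indep hind => i hi; rewrite /M0 hi.
  by move=> i hi; rewrite hi Gz.
  by rewrite /g mulmxA -(mulmxA _ w z).
have [s s_neq0 hs] := lin_indep_perturb infF divD M1 hM0.
exists (v + (s%:A : D)%:M *m g); first exact: V_add Vv (V_mul (B_scalar s) (V_mul Bb Vw)).
apply: (lin_indep_triangular divD hs (e := s%:A) (kappa := a)); rewrite ?alg_eq0 //.
  move=> i hi; rewrite /M0 /M1 /G /stack_rows hi; case: ltnP => //= _.
    by rewrite scaler0 addr0.
  by rewrite mul_scalar_mx linearD linearZ.
rewrite /M0 /M1 ltnn andbF scaler0 addr0 mul_scalar_mx.
by apply: stack_rows_shift => // x; rewrite mulr_algl mulr_algr.
Qed.

Lemma block_rows_lin_indep P : (P <= m)%N ->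
  exists vs : nat -> 'M[D]_(n.+1, m), (forall j, V (vs j)) /\ lin_indep P (block_rows vs).
Proof.
elim: P => [|P IH] lt_Pm; first by exists (fun _ => 0); split => // j; apply: V_0.
have [vs [Vvs hP]] := IH (ltnW lt_Pm).
set j := (P %/ n.+1)%N; set t := (P %% n.+1)%N.
have eP : P = (j * n.+1 + t)%N by apply: divn_eq.
have lt_P_jn i : (i <= P)%N -> (i < j * n.+1 + n.+1)%N.
  by move=> hi; rewrite (leq_ltn_trans hi) // eP ltn_add2l ltn_pmod.
have hP' : lin_indep (j * n.+1 + t) (stack_rows (j * n.+1) (block_rows vs) (vs j)).
  rewrite -eP; apply: eq_lin_indep hP => i hi.
  by rewrite stack_block_rows // lt_P_jn // ltnW.
have lt_Pm' : (j * n.+1 + t < m)%N by rewrite -eP.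
have [u Vu hu] := stack_rows_extend (Vvs j) hP' (ltn_pmod _ (ltn0Sn n)) lt_Pm'.
pose vs' k := if k == j then u else vs k.
exists vs'; split => [k|]; first by rewrite /vs'; case: eqP.
rewrite eP; apply: eq_lin_indep hu => i hi.
have -> : u = vs' j by rewrite /vs' eqxx.
apply: stack_block_rows => [k kj|]; first by rewrite /vs' (negPf kj).
by apply: lt_P_jn; rewrite eP -ltnS.
Qed.

End Extension.

Lemma mulmx_A_automorphism (D : nzRingType) n m (S T : 'M[D]_m) :
  T *m S = 1%:M -> S *m T = 1%:M -> A_automorphism (fun X : 'M_(n.+1, m) => X *m T).
Proof.
move=> TS ST; split; first by move=> x y; rewrite mulmxDl.
split; first by move=> a x; rewrite mulmxA.
by exists (mulmx^~ S) => X; rewrite -mulmxA ?TS ?ST mulmx1.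
Qed.

Theorem lemma1p2 (F : fieldType) (D : unitAlgType F) (n m : nat)
  (B : 'M[D]_n.+1 -> Prop) (V : 'M[D]_(n.+1, m) -> Prop) :
  infinite_field F -> division_ring D ->
  subalg_containing_k B -> dense B ->
  (0 < m)%N ->
  B_submodule B V -> A_generates V ->
  exists sigma : 'M[D]_(n.+1, m) -> 'M[D]_(n.+1, m),
    A_automorphism sigma /\
    (forall j : 'I_(m %/ n.+1), exists2 v, V v & sigma v = Eblk D j) /\
    (exists Y : 'M[D]_(n.+1, m),
       (exists2 v, V v & sigma v = Y) /\ full_col_rank (last_cols Y)).
Proof.
move=> infF divD subalgB denseB _ submodV genV.
have [vs [Vvs hI]] := block_rows_lin_indep infF divD subalgB denseB submodV genV (leqnn m).
have [T [TS ST]] := lin_indep_invertible divD hI.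
have hT (k : 'I_m) : block_rows vs k *m T = row k 1%:M by rewrite -ST row_mul rowK.
exists (mulmx^~ T); split; first exact: mulmx_A_automorphism TS ST.
split; first by move=> j; exists (vs j); last exact: block_rows_Eblk.
exists (vs (m %/ n.+1)%N *m T); split; first by exists (vs (m %/ n.+1)%N).
exact: block_rows_full_col_rank.
Qed.
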